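(* Let $K$ be a complete metric space and let $A$ be a closed subalgebra of $C_b(K)$. If $\rho A$ is a norming subset of $A$, then the set of all smooth points of the closed unit ball $B_A$ contains a dense $G_\delta$ subset of the unit sphere $S_A$.
   Context: $C_b(K)$ is the Banach space of bounded continuous scalar-valued functions on $K$ with the supremum norm. A nonzero $f\in C_b(K)$ is a strong peak function at $t\in K$ if every sequence $\{t_n\}$ in $K$ with $\lim_n|f(t_n)|=\|f\|$ converges to $t$. A point $t\in K$ is a strong peak point for $A$ if there is a strong peak function $f\in A$ with $\|f\|=|f(t)|$; $\rho A$ is the set of all strong peak points for $A$. A subset $F\subset K$ is a norming subset for $A$ if $\|f\|=\sup_{t\in F}|f(t)|$ for all $f\in A$. A point $x$ of the unit ball $B_Z$ of a Banach space $Z$ is a smooth point if there is a unique $z^*\in B_{Z^*}$ with $\operatorname{Re} z^*(x)=1$. *)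

From Stdlib Require Import Reals Lra Classical ClassicalEpsilon.
Open Scope R_scope.

(** The scalar field is
    selected by a boolean [isreal]: if [isreal = true] the scalars are the
    reals (pairs with zero imaginary part), otherwise all of C. *)
Definition Cx : Type := (R * R)%type.
Definition Cre (z : Cx) : R := fst z.
Definition Cim (z : Cx) : R := snd z.
Definition C0 : Cx := (0, 0).
Definition Cadd (z w : Cx) : Cx := (fst z + fst w, snd z + snd w).
Definition Copp (z : Cx) : Cx := (- fst z, - snd z).
Definition Cmul (z w : Cx) : Cx :=
  (fst z * fst w - snd z * snd w, fst z * snd w + snd z * fst w).
Definition Cmod (z : Cx) : R := sqrt (fst z ^ 2 + snd z ^ 2).

Definition scalar (isreal : bool) (z : Cx) : Prop :=
  if isreal then snd z = 0 else True.

Definition is_metric {K : Type} (d : K -> K -> R) : Prop :=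
  (forall x y, 0 <= d x y) /\
  (forall x y, d x y = 0 <-> x = y) /\
  (forall x y, d x y = d y x) /\
  (forall x y z, d x z <= d x y + d y z).

Definition seq_converges {K : Type} (d : K -> K -> R) (u : nat -> K) (l : K) : Prop :=
  forall eps, 0 < eps -> exists N, forall n, (N <= n)%nat -> d (u n) l < eps.

Definition is_Cauchy {K : Type} (d : K -> K -> R) (u : nat -> K) : Prop :=
  forall eps, 0 < eps -> exists N, forall m n, (N <= m)%nat -> (N <= n)%nat ->
    d (u m) (u n) < eps.

Definition complete_metric {K : Type} (d : K -> K -> R) : Prop :=
  forall u : nat -> K, is_Cauchy d u -> exists l, seq_converges d u l.

Definition fcont {K : Type} (d : K -> K -> R) (f : K -> Cx) : Prop :=
  forall t eps, 0 < eps -> exists delta, 0 < delta /\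
    forall s, d t s < delta -> Cmod (Cadd (f s) (Copp (f t))) < eps.

Definition fbounded {K : Type} (f : K -> Cx) : Prop :=
  exists M, forall t, Cmod (f t) <= M.

Definition Cb (isreal : bool) {K : Type} (d : K -> K -> R) (f : K -> Cx) : Prop :=
  (forall t, scalar isreal (f t)) /\ fcont d f /\ fbounded f.

(** Supremum norm (the least upper bound of {|f t|}; 0 is adjoined so that
    the norm of the function on an empty space is 0). *)
Definition supnorm {K : Type} (f : K -> Cx) : R :=
  epsilon (inhabits 0)
    (fun r => is_lub (fun y => y = 0 \/ exists t, y = Cmod (f t)) r).

Definition fadd {K : Type} (f g : K -> Cx) : K -> Cx := fun t => Cadd (f t) (g t).
Definition fsub {K : Type} (f g : K -> Cx) : K -> Cx := fun t => Cadd (f t) (Copp (g t)).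
Definition fmul {K : Type} (f g : K -> Cx) : K -> Cx := fun t => Cmul (f t) (g t).
Definition fscale {K : Type} (c : Cx) (f : K -> Cx) : K -> Cx := fun t => Cmul c (f t).
Definition fzero {K : Type} : K -> Cx := fun _ => C0.

Definition subalgebra (isreal : bool) {K : Type} (d : K -> K -> R)
  (A : (K -> Cx) -> Prop) : Prop :=
  (forall f, A f -> Cb isreal d f) /\
  A fzero /\
  (forall f g, A f -> A g -> A (fadd f g)) /\
  (forall c f, scalar isreal c -> A f -> A (fscale c f)) /\
  (forall f g, A f -> A g -> A (fmul f g)).

Definition closed_in_Cb (isreal : bool) {K : Type} (d : K -> K -> R)
  (A : (K -> Cx) -> Prop) : Prop :=
  forall (u : nat -> K -> Cx) (g : K -> Cx),
    (forall n, A (u n)) -> Cb isreal d g ->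
    Un_cv (fun n => supnorm (fsub (u n) g)) 0 -> A g.

Definition closed_subalgebra (isreal : bool) {K : Type} (d : K -> K -> R)
  (A : (K -> Cx) -> Prop) : Prop :=
  subalgebra isreal d A /\ closed_in_Cb isreal d A.

Definition strong_peak_function (isreal : bool) {K : Type} (d : K -> K -> R)
  (f : K -> Cx) (t : K) : Prop :=
  Cb isreal d f /\ (exists s, f s <> C0) /\
  forall u : nat -> K,
    Un_cv (fun n => Cmod (f (u n))) (supnorm f) -> seq_converges d u t.

Definition strong_peak_points (isreal : bool) {K : Type} (d : K -> K -> R)
  (A : (K -> Cx) -> Prop) (t : K) : Prop :=
  exists f, A f /\ strong_peak_function isreal d f t /\ supnorm f = Cmod (f t).

Definition norming {K : Type} (A : (K -> Cx) -> Prop) (F : K -> Prop) : Prop :=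
  forall f, A f ->
    is_lub (fun y => y = 0 \/ exists t, F t /\ y = Cmod (f t)) (supnorm f).

(** Closed unit ball B_A of the dual A^* : bounded scalar-linear functionals
    on A of norm at most 1.  Two functionals are identified when they agree on A. *)
Definition dual_ball (isreal : bool) {K : Type} (A : (K -> Cx) -> Prop)
  (phi : (K -> Cx) -> Cx) : Prop :=
  (forall f, A f -> scalar isreal (phi f)) /\
  (forall f g, A f -> A g -> phi (fadd f g) = Cadd (phi f) (phi g)) /\
  (forall c f, scalar isreal c -> A f -> phi (fscale c f) = Cmul c (phi f)) /\
  (forall f, A f -> Cmod (phi f) <= supnorm f).

Definition smooth_point (isreal : bool) {K : Type} (A : (K -> Cx) -> Prop)
  (x : K -> Cx) : Prop :=
  A x /\ supnorm x <= 1 /\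
  exists phi, dual_ball isreal A phi /\ Cre (phi x) = 1 /\
    forall psi, dual_ball isreal A psi -> Cre (psi x) = 1 ->
      forall f, A f -> psi f = phi f.

Definition unit_sphere {K : Type} (A : (K -> Cx) -> Prop) (x : K -> Cx) : Prop :=
  A x /\ supnorm x = 1.

Definition open_in_A {K : Type} (A : (K -> Cx) -> Prop) (U : (K -> Cx) -> Prop) : Prop :=
  forall x, A x -> U x -> exists eps, 0 < eps /\
    forall y, A y -> supnorm (fsub y x) < eps -> U y.

Definition dense_Gdelta_in {K : Type} (A : (K -> Cx) -> Prop)
  (S G : (K -> Cx) -> Prop) : Prop :=
  (forall x, G x -> S x) /\
  (exists U : nat -> (K -> Cx) -> Prop,
     (forall n, open_in_A A (U n)) /\
     forall x, G x <-> (S x /\ forall n, U n x)) /\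
  (forall x eps, S x -> 0 < eps -> exists g, G g /\ supnorm (fsub g x) < eps).

From Stdlib Require Import Reals Lra Lia Psatz Classical ClassicalEpsilon IndefiniteDescription.
Open Scope R_scope.

(** Say that [x] has an
    [eps]-thin top if, for some [del > 0], the set where [|x|] exceeds
    [‖x‖ - del] has diameter less than [eps].  The dense [G_delta] subset of
    the unit sphere [S_A] is the set of norm-one [x] having [1/(n+1)]-thin
    tops for every [n].
    - Thin tops persist under small perturbations, so the sets are open.
    - Density: at a strong peak point [t] where [|h|] is nearly maximal,
      adding to [h] a small multiple of a high power of a peak function at
      [t] creates a thin top ([perturb_thin]).  Iterating with geometrically
      shrinking radii and passing to the limit in the complete space [A]
      yields thin tops at all scales ([thin_everywhere_approx]); finally
      normalize ([sphere_density]).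
    - Smoothness: since [K] is complete, a norm-one [x] with thin tops at all
      scales attains its norm at one point [t] and is close to its norm only
      near [t] ([thin_top_peak]); then every functional supporting [x]
      kills the functions vanishing at [t], hence equals [f |-> f t * conj (x t)]
      ([smooth_at_peak]). *)

Definition Cconj (z : Cx) : Cx := (fst z, - snd z).

Lemma Cx_eq (z w : Cx) : fst z = fst w -> snd z = snd w -> z = w.
Proof. destruct z, w; simpl; intros; subst; reflexivity. Qed.

Lemma Cmod_nonneg (z : Cx) : 0 <= Cmod z.
Proof. apply sqrt_pos. Qed.

Lemma Cmod_sq (z : Cx) : Cmod z * Cmod z = fst z ^ 2 + snd z ^ 2.
Proof. unfold Cmod; rewrite sqrt_sqrt; nra. Qed.

Lemma Cmod_unique (z : Cx) (r : R) :
  0 <= r -> r * r = fst z ^ 2 + snd z ^ 2 -> Cmod z = r.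
Proof. intros Hr Hsq; unfold Cmod; rewrite <- Hsq; apply sqrt_square, Hr. Qed.

Lemma Cmod_le_sq (z : Cx) (r : R) :
  0 <= r -> fst z ^ 2 + snd z ^ 2 <= r * r -> Cmod z <= r.
Proof.
  intros Hr Hsq; unfold Cmod; rewrite <- (sqrt_square r Hr).
  apply sqrt_le_1_alt, Hsq.
Qed.

Lemma Cmod_eq0 (z : Cx) : Cmod z = 0 -> z = C0.
Proof.
  intro H0; pose proof (Cmod_sq z) as Hsq; rewrite H0 in Hsq.
  apply Cx_eq; simpl; nra.
Qed.

Lemma Cmod_real (a : R) : Cmod (a, 0) = Rabs a.
Proof. unfold Cmod; simpl; rewrite <- sqrt_Rsqr_abs; f_equal; unfold Rsqr; ring. Qed.

Lemma Cmod_mul (z w : Cx) : Cmod (Cmul z w) = Cmod z * Cmod w.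
Proof.
  pose proof (Cmod_nonneg z); pose proof (Cmod_nonneg w).
  apply Cmod_unique; [nra |].
  transitivity ((Cmod z * Cmod z) * (Cmod w * Cmod w)); [ring |].
  rewrite !Cmod_sq; destruct z, w; unfold Cmul; simpl; ring.
Qed.

Lemma Cmod_opp (z : Cx) : Cmod (Copp z) = Cmod z.
Proof. unfold Cmod, Copp; simpl; f_equal; ring. Qed.

Lemma Cmod_conj (z : Cx) : Cmod (Cconj z) = Cmod z.
Proof. unfold Cmod, Cconj; simpl; f_equal; ring. Qed.

Lemma Cmul_conj_r (z : Cx) : Cmul z (Cconj z) = (Cmod z * Cmod z, 0).
Proof. rewrite Cmod_sq; apply Cx_eq; unfold Cmul, Cconj; simpl; ring. Qed.

Lemma Cmod_fst (z : Cx) : Rabs (fst z) <= Cmod z.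
Proof.
  rewrite <- Cmod_real; apply Cmod_le_sq; [apply Cmod_nonneg |].
  rewrite Cmod_sq; simpl; nra.
Qed.

Lemma Cmod_snd (z : Cx) : Rabs (snd z) <= Cmod z.
Proof.
  rewrite <- Cmod_real; apply Cmod_le_sq; [apply Cmod_nonneg |].
  rewrite Cmod_sq; simpl; nra.
Qed.

Lemma Cmod_le_coords (z : Cx) : Cmod z <= Rabs (fst z) + Rabs (snd z).
Proof.
  apply Cmod_le_sq; [pose proof (Rabs_pos (fst z)); pose proof (Rabs_pos (snd z)); lra |].
  pose proof (Rsqr_abs (fst z)); pose proof (Rsqr_abs (snd z)); unfold Rsqr in *.
  pose proof (Rabs_pos (fst z)); pose proof (Rabs_pos (snd z)); nra.
Qed.

Lemma Cdot_le (z w : Cx) : fst z * fst w + snd z * snd w <= Cmod z * Cmod w.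
Proof.
  pose proof (Cmod_nonneg z); pose proof (Cmod_nonneg w).
  assert (Hsq : (fst z * fst w + snd z * snd w) ^ 2 <= (Cmod z * Cmod w) ^ 2).
  { replace ((Cmod z * Cmod w) ^ 2) with ((Cmod z * Cmod z) * (Cmod w * Cmod w)) by ring.
    rewrite !Cmod_sq; pose proof (pow2_ge_0 (fst z * snd w - snd z * fst w)); nra. }
  assert (0 <= Cmod z * Cmod w) by (apply Rmult_le_pos; assumption).
  apply Rnot_lt_le; intro Hlt; nra.
Qed.

Lemma Cmod_add (z w : Cx) : Cmod (Cadd z w) <= Cmod z + Cmod w.
Proof.
  pose proof (Cmod_nonneg z); pose proof (Cmod_nonneg w); pose proof (Cdot_le z w).
  apply Cmod_le_sq; [lra |].
  replace ((Cmod z + Cmod w) * (Cmod z + Cmod w))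
    with (Cmod z * Cmod z + Cmod w * Cmod w + 2 * (Cmod z * Cmod w)) by ring.
  rewrite !Cmod_sq; unfold Cadd; simpl; nra.
Qed.

Lemma Cmod_sub_sym (z w : Cx) : Cmod (Cadd z (Copp w)) = Cmod (Cadd w (Copp z)).
Proof. unfold Cmod, Cadd, Copp; simpl; f_equal; ring. Qed.

Lemma Cmod_sub_self (z : Cx) : Cmod (Cadd z (Copp z)) = 0.
Proof. apply Cmod_unique; [lra | simpl; ring]. Qed.

Lemma Cmod_sub_tri (a b c : Cx) :
  Cmod (Cadd a (Copp c)) <= Cmod (Cadd a (Copp b)) + Cmod (Cadd b (Copp c)).
Proof.
  replace (Cadd a (Copp c)) with (Cadd (Cadd a (Copp b)) (Cadd b (Copp c)))
    by (apply Cx_eq; simpl; ring).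
  apply Cmod_add.
Qed.

Lemma Cmod_le_add (a b : Cx) : Cmod a <= Cmod b + Cmod (Cadd a (Copp b)).
Proof.
  replace a with (Cadd b (Cadd a (Copp b))) at 1 by (apply Cx_eq; simpl; ring).
  apply Cmod_add.
Qed.

Lemma scalar_real (isreal : bool) (a : R) : scalar isreal (a, 0).
Proof. unfold scalar; destruct isreal; auto. Qed.

Lemma scalar_opp (isreal : bool) (z : Cx) : scalar isreal z -> scalar isreal (Copp z).
Proof. unfold scalar; destruct isreal; auto; simpl; intros ->; ring. Qed.

Lemma scalar_conj (isreal : bool) (z : Cx) : scalar isreal z -> scalar isreal (Cconj z).
Proof. unfold scalar; destruct isreal; auto; simpl; intros ->; ring. Qed.

Lemma scalar_mul (isreal : bool) (z w : Cx) :
  scalar isreal z -> scalar isreal w -> scalar isreal (Cmul z w).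
Proof. unfold scalar; destruct isreal; auto; simpl; intros -> ->; ring. Qed.

Lemma push_outward (isreal : bool) (z : Cx) (c : R) :
  scalar isreal z -> 0 <= c ->
  exists k, scalar isreal k /\ Cmod k = c /\ Cmod (Cadd z k) = Cmod z + c.
Proof.
  intros Hz Hc; destruct (Req_dec (Cmod z) 0) as [Hz0 | Hz0].
  - apply Cmod_eq0 in Hz0; subst z; exists (c, 0).
    split; [apply scalar_real |]; split; [rewrite Cmod_real; apply Rabs_pos_eq, Hc |].
    replace (Cadd C0 (c, 0)) with (c, 0) by (apply Cx_eq; simpl; ring).
    rewrite Cmod_real, Rabs_pos_eq by exact Hc.
    replace (Cmod C0) with 0; [ring | symmetry; apply Cmod_unique; simpl; lra].
  - pose proof (Cmod_nonneg z) as Hnn.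
    exists (Cmul (c / Cmod z, 0) z); split; [| split].
    + apply scalar_mul; [apply scalar_real | exact Hz].
    + rewrite Cmod_mul, Cmod_real, Rabs_pos_eq by (apply Rmult_le_pos; [| left; apply Rinv_0_lt_compat]; lra).
      field; exact Hz0.
    + replace (Cadd z (Cmul (c / Cmod z, 0) z)) with (Cmul (1 + c / Cmod z, 0) z)
        by (apply Cx_eq; simpl; ring).
      rewrite Cmod_mul, Cmod_real, Rabs_pos_eq.
      * field; exact Hz0.
      * assert (0 <= c / Cmod z) by (apply Rmult_le_pos; [| left; apply Rinv_0_lt_compat]; lra); lra.
Qed.

(** * The supremum norm
    [supnorm f] is defined by choice as a least upper bound of
    [{0} ∪ {|f t|}]; for bounded [f] such a bound exists, so it is the sup. *)

Lemma supnorm_lub {K : Type} (f : K -> Cx) :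
  fbounded f -> is_lub (fun y => y = 0 \/ exists t, y = Cmod (f t)) (supnorm f).
Proof.
  intros [M HM]; unfold supnorm; apply epsilon_spec.
  destruct (completeness (fun y => y = 0 \/ exists t, y = Cmod (f t))) as [m Hm].
  - exists (Rmax 0 M); intros y [-> | [t ->]];
      [apply Rmax_l | eapply Rle_trans; [apply HM | apply Rmax_r]].
  - exists 0; left; reflexivity.
  - exists m; exact Hm.
Qed.

Lemma supnorm_ge {K : Type} (f : K -> Cx) (s : K) :
  fbounded f -> Cmod (f s) <= supnorm f.
Proof. intro Hf; apply (proj1 (supnorm_lub f Hf)); right; exists s; reflexivity. Qed.

Lemma supnorm_nonneg {K : Type} (f : K -> Cx) : fbounded f -> 0 <= supnorm f.
Proof. intro Hf; apply (proj1 (supnorm_lub f Hf)); left; reflexivity. Qed.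

Lemma supnorm_le {K : Type} (f : K -> Cx) (B : R) :
  (forall s, Cmod (f s) <= B) -> 0 <= B -> supnorm f <= B.
Proof.
  intros HB H0; apply (proj2 (supnorm_lub f (ex_intro _ B HB))).
  intros y [-> | [t ->]]; auto.
Qed.

Lemma supnorm_approx {K : Type} (f : K -> Cx) (a : R) :
  0 <= a -> a < supnorm f -> exists s, a < Cmod (f s).
Proof.
  intros Ha Hlt; apply NNPP; intro Hno.
  assert (Hle : supnorm f <= a).
  { apply supnorm_le; [| exact Ha].
    intro s; apply Rnot_lt_le; intro; apply Hno; exists s; assumption. }
  lra.
Qed.

Lemma fbounded_sub {K : Type} (f g : K -> Cx) :
  fbounded f -> fbounded g -> fbounded (fsub f g).
Proof.
  intros [M HM] [N HN]; exists (M + N); intro s; unfold fsub.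
  eapply Rle_trans; [apply Cmod_add |]; rewrite Cmod_opp.
  specialize (HM s); specialize (HN s); lra.
Qed.

Lemma supnorm_sub_self {K : Type} (f : K -> Cx) : supnorm (fsub f f) = 0.
Proof.
  apply Rle_antisym.
  - apply supnorm_le; [intro s; unfold fsub; rewrite Cmod_sub_self |]; lra.
  - apply supnorm_nonneg; exists 0; intro s; unfold fsub; rewrite Cmod_sub_self; lra.
Qed.

Lemma supnorm_sub_sym {K : Type} (f g : K -> Cx) :
  fbounded f -> fbounded g -> supnorm (fsub f g) = supnorm (fsub g f).
Proof.
  intros Hf Hg.
  assert (Hfg := fbounded_sub f g Hf Hg); assert (Hgf := fbounded_sub g f Hg Hf).
  apply Rle_antisym; apply supnorm_le; try (apply supnorm_nonneg; assumption);
    intro s; unfold fsub; rewrite Cmod_sub_sym; apply (supnorm_ge (fsub _ _)); assumption.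
Qed.

Lemma supnorm_sub_tri {K : Type} (f g h : K -> Cx) :
  fbounded f -> fbounded g -> fbounded h ->
  supnorm (fsub f h) <= supnorm (fsub f g) + supnorm (fsub g h).
Proof.
  intros Hf Hg Hh.
  assert (Hfg := fbounded_sub f g Hf Hg); assert (Hgh := fbounded_sub g h Hg Hh).
  pose proof (supnorm_nonneg _ Hfg); pose proof (supnorm_nonneg _ Hgh).
  apply supnorm_le; [| lra]; intro s; unfold fsub.
  eapply Rle_trans; [apply (Cmod_sub_tri _ (g s)) |].
  apply Rplus_le_compat; apply (supnorm_ge (fsub _ _)); assumption.
Qed.

Lemma supnorm_le_sub {K : Type} (f g : K -> Cx) :
  fbounded f -> fbounded g -> supnorm g <= supnorm f + supnorm (fsub g f).
Proof.
  intros Hf Hg; assert (Hgf := fbounded_sub g f Hg Hf).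
  pose proof (supnorm_nonneg _ Hf); pose proof (supnorm_nonneg _ Hgf).
  apply supnorm_le; [| lra]; intro s.
  eapply Rle_trans; [apply (Cmod_le_add _ (f s)) |].
  apply Rplus_le_compat; [apply supnorm_ge | apply (supnorm_ge (fsub g f))]; assumption.
Qed.

Lemma supnorm_scale {K : Type} (f : K -> Cx) (a : R) :
  fbounded f -> 0 < a -> supnorm (fscale (a, 0) f) = a * supnorm f.
Proof.
  intros Hf Ha.
  assert (Hm : forall s, Cmod (fscale (a, 0) f s) = a * Cmod (f s)).
  { intro s; unfold fscale; rewrite Cmod_mul, Cmod_real, Rabs_pos_eq; lra. }
  pose proof (supnorm_nonneg f Hf).
  apply Rle_antisym.
  - apply supnorm_le; [| nra]; intro s; rewrite Hm.
    apply Rmult_le_compat_l; [lra | apply supnorm_ge, Hf].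
  - assert (Hb : supnorm f <= / a * supnorm (fscale (a, 0) f)).
    { assert (Has : fbounded (fscale (a, 0) f)).
      { destruct Hf as [M HM]; exists (a * M); intro s; rewrite Hm.
        apply Rmult_le_compat_l; [lra | apply HM]. }
      pose proof (supnorm_nonneg _ Has).
      apply supnorm_le.
      - intro s; pose proof (supnorm_ge _ s Has) as Hs; rewrite Hm in Hs.
        apply (Rmult_le_reg_l a); [exact Ha |].
        rewrite <- Rmult_assoc, Rinv_r, Rmult_1_l by lra; exact Hs.
      - apply Rmult_le_pos; [left; apply Rinv_0_lt_compat |]; assumption. }
    apply (Rmult_le_compat_l a) in Hb; [| lra].
    rewrite <- Rmult_assoc, Rinv_r, Rmult_1_l in Hb by lra; exact Hb.
Qed.

Lemma le_of_forall_eps (x y : R) : (forall eps, 0 < eps -> x <= y + eps) -> x <= y.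
Proof.
  intro H; apply Rnot_lt_le; intro Hlt.
  specialize (H ((x - y) / 2) ltac:(lra)); lra.
Qed.

Lemma inv_S_pos (n : nat) : 0 < / INR (S n).
Proof. apply Rinv_0_lt_compat, lt_0_INR; lia. Qed.

Lemma inv_S_le (n m : nat) : (n <= m)%nat -> / INR (S m) <= / INR (S n).
Proof. intro; apply Rinv_le_contravar; [apply lt_0_INR; lia | apply le_INR; lia]. Qed.

Lemma inv_S_small (eps : R) : 0 < eps -> exists n, / INR (S n) < eps.
Proof.
  intro He; destruct (INR_archimed eps 1 He) as [n Hn]; exists n.
  rewrite S_INR; pose proof (pos_INR n).
  apply (Rmult_lt_reg_r (INR n + 1)); [lra |]; rewrite Rinv_l by lra; nra.
Qed.

Lemma small_weight (F del : R) : 0 < del -> exists c, 0 < c /\ c * F * F <= del.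
Proof.
  intro Hdel; exists (del / (F * F + 1)); split; [apply Rdiv_lt_0_compat; nra |].
  replace (del / (F * F + 1) * F * F) with (del * (F * F / (F * F + 1))) by (field; nra).
  assert (F * F / (F * F + 1) <= 1).
  { apply Rmult_le_reg_r with (F * F + 1); [nra |].
    unfold Rdiv; rewrite Rmult_assoc, Rinv_l; nra. }
  nra.
Qed.

Lemma halving_to_zero (r : nat -> R) :
  (forall k, 0 < r k) -> (forall k, r (S k) <= r k / 2) ->
  forall eps, 0 < eps -> exists N, forall n, (N <= n)%nat -> r n < eps.
Proof.
  intros Hpos Hhalf eps He.
  assert (Hgeo : forall n, r n <= r 0%nat * (/ 2) ^ n).
  { induction n; simpl; [lra |]; pose proof (Hhalf n); lra. }
  pose proof (Hpos 0%nat) as H0.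
  destruct (pow_lt_1_zero (/ 2) ltac:(rewrite Rabs_pos_eq; lra) (eps / r 0%nat))
    as [N HN]; [apply Rdiv_lt_0_compat; lra |].
  exists N; intros n Hn; specialize (HN n Hn).
  rewrite Rabs_pos_eq in HN by (apply pow_le; lra).
  apply (Rmult_lt_compat_l (r 0%nat)) in HN; [| lra].
  replace (r 0%nat * (eps / r 0%nat)) with eps in HN by (field; lra).
  pose proof (Hgeo n); lra.
Qed.

Lemma iterate_choice {T : Type} (P : nat -> T -> Prop) (Q : nat -> T -> T -> Prop) (x0 : T) :
  P 0%nat x0 -> (forall k x, P k x -> exists y, P (S k) y /\ Q k x y) ->
  exists u : nat -> T, forall k, P k (u k) /\ Q k (u k) (u (S k)).
Proof.
  intros H0 Hstep.
  assert (Hch : forall kx : nat * T, exists y,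
             P (fst kx) (snd kx) -> P (S (fst kx)) y /\ Q (fst kx) (snd kx) y).
  { intros [k x]; destruct (classic (P k x)) as [Hp | Hn].
    - destruct (Hstep k x Hp) as [y Hy]; exists y; intros _; exact Hy.
    - exists x; intro Hp; contradiction. }
  destruct (functional_choice _ Hch) as [F HF].
  set (u := nat_rect (fun _ => T) x0 (fun k y => F (k, y))).
  assert (Hinv : forall k, P k (u k)).
  { induction k; [exact H0 | exact (proj1 (HF (k, u k) IHk))]. }
  exists u; intro k; split; [apply Hinv | exact (proj2 (HF (k, u k) (Hinv k)))].
Qed.

Lemma telescope_bound (u : nat -> Cx) (r : nat -> R) :
  (forall k, r (S k) <= r k / 2) ->
  (forall k, Cmod (Cadd (u (S k)) (Copp (u k))) <= r k / 4) ->
  forall k m, (k <= m)%nat -> Cmod (Cadd (u m) (Copp (u k))) <= r k / 2 - r m / 2.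
Proof.
  intros Hhalf Hstep k m Hkm; replace m with (k + (m - k))%nat by lia.
  induction (m - k)%nat as [| j IH].
  - rewrite Nat.add_0_r, Cmod_sub_self; lra.
  - replace (k + S j)%nat with (S (k + j)) by lia.
    eapply Rle_trans; [apply (Cmod_sub_tri _ (u (k + j)%nat)) |].
    pose proof (Hstep (k + j)%nat); pose proof (Hhalf (k + j)%nat); lra.
Qed.

Lemma Cx_limit (u : nat -> Cx) (e : nat -> R) :
  (forall eps, 0 < eps -> exists k, e k < eps) ->
  (forall k m, (k <= m)%nat -> Cmod (Cadd (u m) (Copp (u k))) <= e k) ->
  exists l, forall k, Cmod (Cadd l (Copp (u k))) <= e k.
Proof.
  intros Hsmall Hcau.
  assert (Hdist : forall k n m, (k <= n)%nat -> (k <= m)%nat ->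
             Cmod (Cadd (u n) (Copp (u m))) <= 2 * e k).
  { intros k n m Hn Hm; eapply Rle_trans; [apply (Cmod_sub_tri _ (u k)) |].
    rewrite (Cmod_sub_sym (u k)); pose proof (Hcau k n Hn); pose proof (Hcau k m Hm); lra. }
  assert (Hcoord : forall p : Cx -> R,
             (forall z, Rabs (p z) <= Cmod z) -> (forall z w, p (Cadd z (Copp w)) = p z - p w) ->
             Cauchy_crit (fun n => p (u n))).
  { intros p Hp Hlin eps He; destruct (Hsmall (eps / 2) ltac:(lra)) as [k Hk].
    exists k; intros n m Hn Hm; unfold R_dist; rewrite <- Hlin.
    eapply Rle_lt_trans; [apply Hp |]; pose proof (Hdist k n m Hn Hm); lra. }
  destruct (R_complete _ (Hcoord fst Cmod_fst ltac:(intros; simpl; ring))) as [l1 Hl1].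
  destruct (R_complete _ (Hcoord snd Cmod_snd ltac:(intros; simpl; ring))) as [l2 Hl2].
  exists (l1, l2); intro k; apply le_of_forall_eps; intros eps He.
  destruct (Hl1 (eps / 2) ltac:(lra)) as [N1 HN1]; destruct (Hl2 (eps / 2) ltac:(lra)) as [N2 HN2].
  set (m := Nat.max k (Nat.max N1 N2)).
  specialize (HN1 m ltac:(unfold m; lia)); specialize (HN2 m ltac:(unfold m; lia)).
  unfold R_dist in HN1, HN2; rewrite Rabs_minus_sym in HN1, HN2.
  eapply Rle_trans; [apply (Cmod_sub_tri _ (u m)) |].
  assert (Hcoords : Cmod (Cadd (l1, l2) (Copp (u m)))
                    <= Rabs (l1 - fst (u m)) + Rabs (l2 - snd (u m)))
    by exact (Cmod_le_coords _).
  pose proof (Hcau k m ltac:(unfold m; lia)); lra.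
Qed.

Fixpoint fpow {K : Type} (G : K -> Cx) (m : nat) : K -> Cx :=
  match m with O => G | S m => fmul G (fpow G m) end.

Lemma fpow_mod {K : Type} (G : K -> Cx) (m : nat) (s : K) :
  Cmod (fpow G m s) = Cmod (G s) ^ (S m).
Proof. induction m; simpl; [ring |]; unfold fmul; rewrite Cmod_mul, IHm; simpl; ring. Qed.

Lemma fpow_at_one {K : Type} (G : K -> Cx) (m : nat) (t : K) :
  G t = (1, 0) -> fpow G m t = (1, 0).
Proof.
  intro H1; induction m; simpl; [exact H1 |].
  unfold fmul; rewrite IHm, H1; apply Cx_eq; simpl; ring.
Qed.

Definition thin_top {K : Type} (d : K -> K -> R) (eps : R) (x : K -> Cx) : Prop :=
  exists del, 0 < del /\ forall s1 s2,
    supnorm x - del < Cmod (x s1) -> supnorm x - del < Cmod (x s2) -> d s1 s2 < eps.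

Lemma thin_top_scale {K : Type} (d : K -> K -> R) (eps a : R) (x : K -> Cx) :
  fbounded x -> 0 < a -> thin_top d eps x -> thin_top d eps (fscale (a, 0) x).
Proof.
  intros Hx Ha [del [Hdel Htop]]; exists (a * del); split; [nra |].
  assert (Hm : forall s, Cmod (fscale (a, 0) x s) = a * Cmod (x s)).
  { intro s; unfold fscale; rewrite Cmod_mul, Cmod_real, Rabs_pos_eq; lra. }
  assert (Hlev : forall s, supnorm (fscale (a, 0) x) - a * del < Cmod (fscale (a, 0) x s) ->
                           supnorm x - del < Cmod (x s)).
  { intros s Hs; rewrite supnorm_scale, Hm in Hs by assumption.
    apply (Rmult_lt_reg_l a); [exact Ha | lra]. }
  intros s1 s2 H1 H2; apply Htop; apply Hlev; assumption.
Qed.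

Lemma thin_top_stable {K : Type} (d : K -> K -> R) (eps : R) (x : K -> Cx) :
  fbounded x -> thin_top d eps x -> exists r, 0 < r /\
    forall y, fbounded y -> supnorm (fsub y x) < r -> thin_top d eps y.
Proof.
  intros Hx [del [Hdel Htop]]; exists (del / 3); split; [lra |].
  intros y Hy Hyx; exists (del / 3); split; [lra |].
  assert (Hnorm : supnorm x <= supnorm y + supnorm (fsub y x)).
  { rewrite (supnorm_sub_sym y x Hy Hx); apply supnorm_le_sub; assumption. }
  assert (Hlev : forall s, supnorm y - del / 3 < Cmod (y s) -> supnorm x - del < Cmod (x s)).
  { intros s Hs; pose proof (Cmod_le_add (y s) (x s)).
    pose proof (supnorm_ge (fsub y x) s (fbounded_sub y x Hy Hx)); unfold fsub in *; lra. }
  intros s1 s2 H1 H2; apply Htop; apply Hlev; assumption.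
Qed.

Section ClosedSubalgebra.

Variables (isreal : bool) (K : Type) (d : K -> K -> R).
Hypothesis Hd : is_metric d.
Variable A : (K -> Cx) -> Prop.
Hypothesis HA : closed_subalgebra isreal d A.

Lemma A_bounded (f : K -> Cx) : A f -> fbounded f.
Proof. intro Hf; exact (proj2 (proj2 (proj1 (proj1 HA) f Hf))). Qed.

Lemma A_continuous (f : K -> Cx) : A f -> fcont d f.
Proof. intro Hf; exact (proj1 (proj2 (proj1 (proj1 HA) f Hf))). Qed.

Lemma A_scalar (f : K -> Cx) (t : K) : A f -> scalar isreal (f t).
Proof. intro Hf; exact (proj1 (proj1 (proj1 HA) f Hf) t). Qed.

Lemma A_add (f g : K -> Cx) : A f -> A g -> A (fadd f g).
Proof. apply (proj1 (proj2 (proj2 (proj1 HA)))). Qed.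

Lemma A_scale (c : Cx) (f : K -> Cx) : scalar isreal c -> A f -> A (fscale c f).
Proof. apply (proj1 (proj2 (proj2 (proj2 (proj1 HA))))). Qed.

Lemma A_pow (G : K -> Cx) (m : nat) : A G -> A (fpow G m).
Proof.
  intro HG; induction m; simpl; [exact HG |].
  apply (proj2 (proj2 (proj2 (proj2 (proj1 HA))))); assumption.
Qed.

Lemma thin_top_open (eps : R) : open_in_A A (thin_top d eps).
Proof.
  intros x Hx Htop; destruct (thin_top_stable d eps x (A_bounded x Hx) Htop) as [r [Hr Hst]].
  exists r; split; [exact Hr |]; intros y Hy; apply Hst, A_bounded, Hy.
Qed.

Lemma peak_sharp (F : K -> Cx) (t : K) (rho : R) :
  strong_peak_function isreal d F t -> supnorm F = Cmod (F t) -> 0 < rho ->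
  exists beta, 0 < beta /\ forall s, Cmod (F t) - beta < Cmod (F s) -> d s t < rho.
Proof.
  intros [[_ [_ HFb]] [_ Hpeak]] Hsup Hrho; apply NNPP; intro Hno.
  assert (Hbad : forall k : nat, exists s,
             Cmod (F t) - / INR (S k) < Cmod (F s) /\ ~ d s t < rho).
  { intro k; apply NNPP; intro Hk; apply Hno; exists (/ INR (S k)).
    split; [apply inv_S_pos |]; intros s Hs; apply NNPP; intro; apply Hk; eauto. }
  destruct (functional_choice _ Hbad) as [u Hu].
  assert (Hcv : Un_cv (fun k => Cmod (F (u k))) (supnorm F)).
  { intros e He; destruct (inv_S_small e He) as [N HN]; exists N; intros k Hk.
    unfold R_dist; pose proof (proj1 (Hu k)); pose proof (supnorm_ge F (u k) HFb).
    pose proof (inv_S_le N k Hk); rewrite Rabs_left1; lra. }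
  destruct (Hpeak u Hcv rho Hrho) as [N HN].
  apply (proj2 (Hu N)), HN; lia.
Qed.

Lemma Cmul_inv_conj (z : Cx) :
  0 < Cmod z -> Cmul (Cmul (/ (Cmod z * Cmod z), 0) (Cconj z)) z = (1, 0).
Proof.
  intro Hz; pose proof (Cmod_sq z) as Hsq.
  apply Cx_eq; unfold Cmul, Cconj; simpl; [| field; lra].
  replace ((/ (Cmod z * Cmod z) * fst z - 0 * - snd z) * fst z
           - (/ (Cmod z * Cmod z) * - snd z + 0 * fst z) * snd z)
    with ((fst z ^ 2 + snd z ^ 2) / (Cmod z * Cmod z)) by (field; lra).
  rewrite <- Hsq; field; lra.
Qed.

Lemma normalized_peak (t : K) :
  strong_peak_points isreal d A t ->
  exists G, A G /\ G t = (1, 0) /\ (forall s, Cmod (G s) <= 1) /\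
    forall rho, 0 < rho -> exists b, 0 < b <= 1 /\
      forall s, 1 - b < Cmod (G s) -> d s t < rho.
Proof.
  intros [F [HF [HSP Hsup]]].
  set (a := Cmod (F t)).
  assert (Ha : 0 < a).
  { destruct HSP as [_ [[s Hs] _]].
    assert (Hs' : 0 < Cmod (F s)).
    { destruct (Cmod_nonneg (F s)) as [Hp | H0]; [exact Hp |].
      exfalso; apply Hs, Cmod_eq0; auto. }
    pose proof (supnorm_ge F s (A_bounded F HF)); unfold a; lra. }
  set (mu := Cmul (/ (a * a), 0) (Cconj (F t))).
  assert (Hmu : Cmod mu = / a).
  { unfold mu; rewrite Cmod_mul, Cmod_real, Cmod_conj, Rabs_pos_eq; fold a.
    - field; lra.
    - left; apply Rinv_0_lt_compat; nra. }
  assert (HGm : forall s, Cmod (fscale mu F s) = Cmod (F s) / a).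
  { intro s; unfold fscale; rewrite Cmod_mul, Hmu; unfold Rdiv; ring. }
  exists (fscale mu F); split; [| split; [| split]].
  - apply A_scale; [| exact HF].
    apply scalar_mul; [apply scalar_real | apply scalar_conj, A_scalar, HF].
  - apply (Cmul_inv_conj (F t) Ha).
  - intro s; rewrite HGm; apply Rmult_le_reg_r with a; [exact Ha |].
    unfold Rdiv; rewrite Rmult_assoc, Rinv_l, Rmult_1_l, Rmult_1_r by lra.
    unfold a; rewrite <- Hsup; apply supnorm_ge, A_bounded, HF.
  - intros rho Hrho; destruct (peak_sharp F t rho HSP Hsup Hrho) as [beta [Hb Hnear]].
    exists (Rmin beta a / a); split.
    + split; [apply Rdiv_lt_0_compat; [apply Rmin_glb_lt |]; lra |].
      apply Rmult_le_reg_r with a; [exact Ha |].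
      unfold Rdiv; rewrite Rmult_assoc, Rinv_l, Rmult_1_l, Rmult_1_r by lra; apply Rmin_r.
    + intros s Hs; apply Hnear; rewrite HGm in Hs.
      assert (Hs' : a - Rmin beta a < Cmod (F s)).
      { apply Rmult_lt_compat_r with (r := a) in Hs; [| exact Ha].
        replace ((1 - Rmin beta a / a) * a) with (a - Rmin beta a) in Hs by (field; lra).
        replace (Cmod (F s) / a * a) with (Cmod (F s)) in Hs by (field; lra); exact Hs. }
      pose proof (Rmin_l beta a); fold a; lra.
Qed.

Lemma peak_power (G : K -> Cx) (t : K) (P : K -> Prop) (b : R) :
  A G -> G t = (1, 0) -> (forall s, Cmod (G s) <= 1) -> 0 < b <= 1 ->
  (forall s, 1 - b < Cmod (G s) -> P s) ->
  exists H, A H /\ H t = (1, 0) /\ (forall s, Cmod (H s) <= 1) /\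
    forall s, / 4 < Cmod (H s) -> P s.
Proof.
  intros HG HGt HG1 Hb HP.
  destruct (pow_lt_1_zero (1 - b) ltac:(rewrite Rabs_pos_eq; lra) (/ 4) ltac:(lra))
    as [N HN].
  exists (fpow G N); split; [| split; [| split]].
  - apply A_pow, HG.
  - apply fpow_at_one, HGt.
  - intro s; rewrite fpow_mod, <- (pow1 (S N)).
    apply pow_incr; split; [apply Cmod_nonneg | apply HG1].
  - intros s Hs; apply NNPP; intro HnP.
    assert (Hsmall : Cmod (G s) <= 1 - b).
    { apply Rnot_lt_le; intro; apply HnP, HP; assumption. }
    specialize (HN (S N) ltac:(lia)); rewrite Rabs_pos_eq in HN by (apply pow_le; lra).
    rewrite fpow_mod in Hs.
    assert (Cmod (G s) ^ S N <= (1 - b) ^ S N)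
      by (apply pow_incr; split; [apply Cmod_nonneg | exact Hsmall]).
    lra.
Qed.

Lemma unit_peak (t : K) (rho : R) :
  strong_peak_points isreal d A t -> 0 < rho ->
  exists H, A H /\ H t = (1, 0) /\ (forall s, Cmod (H s) <= 1) /\
    forall s, / 4 < Cmod (H s) -> d s t < rho.
Proof.
  intros Ht Hrho.
  destruct (normalized_peak t Ht) as [G [HG [HGt [HG1 Hpk]]]].
  destruct (Hpk rho Hrho) as [b [Hb Hnear]].
  exact (peak_power G t (fun s => d s t < rho) b HG HGt HG1 Hb Hnear).
Qed.

Hypothesis Hnorm : norming A (strong_peak_points isreal d A).

Lemma norming_approx (h : K -> Cx) (a : R) :
  A h -> 0 < supnorm h -> a < supnorm h ->
  exists t, strong_peak_points isreal d A t /\ a < Cmod (h t).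
Proof.
  intros Hh Hpos Ha; apply NNPP; intro Hno.
  assert (Hle : supnorm h <= Rmax a 0).
  { apply (proj2 (Hnorm h Hh)); intros y [-> | [t [Ht ->]]]; [apply Rmax_r |].
    eapply Rle_trans; [| apply Rmax_l].
    apply Rnot_lt_le; intro; apply Hno; exists t; split; assumption. }
  unfold Rmax in Hle; destruct (Rle_dec a 0); lra.
Qed.

(** Every [h] of positive norm is [r]-close to an element of [A] with an
    [eps]-thin top: add to [h] a bump [k H], where [H] peaks sharply at a
    strong peak point [t] where [|h|] is nearly maximal, and [k] has
    modulus [r/2] and points in the direction of [h t]. *)
Lemma perturb_thin (h : K -> Cx) (r eps : R) :
  A h -> 0 < supnorm h -> 0 < r -> 0 < eps ->
  exists h', A h' /\ thin_top d eps h' /\ supnorm (fsub h' h) < r.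
Proof.
  intros Hh Hpos Hr He; set (c := r / 2).
  destruct (norming_approx h (supnorm h - c / 4) Hh Hpos ltac:(unfold c; lra))
    as [t [Ht Hht]].
  destruct (unit_peak t (eps / 2) Ht ltac:(lra)) as [H [HH [HHt [HH1 HHnear]]]].
  destruct (push_outward isreal (h t) c (A_scalar h t Hh) ltac:(unfold c; lra))
    as [k [Hk [Hkc Hkt]]].
  set (h' := fadd h (fscale k H)).
  assert (Hh' : A h') by (apply A_add; [| apply A_scale]; assumption).
  assert (Hdiff : forall s, Cmod (fsub h' h s) = c * Cmod (H s)).
  { intro s; rewrite <- Hkc, <- Cmod_mul; f_equal.
    unfold fsub, h', fadd, fscale; apply Cx_eq; simpl; ring. }
  assert (Hpeak : Cmod (h' t) = Cmod (h t) + c).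
  { unfold h', fadd, fscale; rewrite HHt.
    replace (Cmul k (1, 0)) with k by (apply Cx_eq; simpl; ring); exact Hkt. }
  assert (Hup : forall s, Cmod (h' s) <= supnorm h + c * Cmod (H s)).
  { intro s; unfold h', fadd, fscale; eapply Rle_trans; [apply Cmod_add |].
    rewrite Cmod_mul, Hkc; pose proof (supnorm_ge h s (A_bounded h Hh)); lra. }
  exists h'; split; [exact Hh' | split].
  -
    assert (Hnear : forall s, supnorm h' - c / 2 < Cmod (h' s) -> d s t < eps / 2).
    { intros s Hs; apply HHnear.
      pose proof (supnorm_ge h' t (A_bounded h' Hh')); pose proof (Hup s).
      apply (Rmult_lt_reg_l c); unfold c in *; lra. }
    exists (c / 2); split; [unfold c; lra |]; intros s1 s2 H1 H2.
    destruct Hd as [_ [_ [Hsym Htri]]].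
    pose proof (Hnear s1 H1); pose proof (Hnear s2 H2); pose proof (Htri s1 t s2).
    rewrite (Hsym t s2) in *; lra.
  - apply Rle_lt_trans with c; [| unfold c; lra].
    apply supnorm_le; [| unfold c; lra]; intro s; rewrite Hdiff.
    pose proof (HH1 s); unfold c in *; nra.
Qed.

Lemma uniform_limit_in_A (h : nat -> K -> Cx) (e : nat -> R) (g : K -> Cx) :
  (forall k, A (h k)) -> (forall k, 0 <= e k) ->
  (forall eps, 0 < eps -> exists N, forall n, (N <= n)%nat -> e n < eps) ->
  (forall k s, Cmod (Cadd (g s) (Copp (h k s))) <= e k) -> A g.
Proof.
  intros Hh He0 Hrate Hclose.
  assert (Hsmall : forall eps, 0 < eps -> exists k, e k < eps).
  { intros eps Heps; destruct (Hrate eps Heps) as [N HN]; exists N; apply HN; lia. }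
  assert (Hscalar : forall s, scalar isreal (g s)).
  { intro s; assert (Hhs : forall k, scalar isreal (h k s)) by (intro k; apply A_scalar, Hh).
    revert Hhs; unfold scalar; case isreal; intro Hhs; [| exact I].
    assert (Habs : Rabs (snd (g s)) <= 0).
    2:{ pose proof (Rle_abs (snd (g s))); pose proof (Rle_abs (- snd (g s))).
        rewrite Rabs_Ropp in *; lra. }
    apply le_of_forall_eps; intros eps Heps; destruct (Hsmall eps Heps) as [k Hk].
    pose proof (Cmod_snd (Cadd (g s) (Copp (h k s)))) as Hsnd; simpl in Hsnd.
    rewrite (Hhs k), Ropp_0, Rplus_0_r in Hsnd; pose proof (Hclose k s); lra. }
  assert (Hcont : fcont d g).
  { intros t eps Heps; destruct (Hsmall (eps / 3) ltac:(lra)) as [k Hk].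
    destruct (A_continuous (h k) (Hh k) t (eps / 3) ltac:(lra)) as [del [Hdel Hnear]].
    exists del; split; [exact Hdel |]; intros s Hs.
    eapply Rle_lt_trans; [apply (Cmod_sub_tri _ (h k s)) |].
    eapply Rle_lt_trans; [apply Rplus_le_compat_l, (Cmod_sub_tri _ (h k t)) |].
    rewrite (Cmod_sub_sym (h k t)).
    pose proof (Hclose k s); pose proof (Hclose k t); pose proof (Hnear s Hs); lra. }
  assert (Hbnd : fbounded g).
  { destruct (A_bounded (h 0%nat) (Hh 0%nat)) as [M HM]; exists (M + e 0%nat); intro s.
    eapply Rle_trans; [apply (Cmod_le_add _ (h 0%nat s)) |].
    pose proof (HM s); pose proof (Hclose 0%nat s); lra. }
  apply ((proj2 HA) h g Hh (conj Hscalar (conj Hcont Hbnd))).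
  intros eps Heps; destruct (Hrate eps Heps) as [N HN]; exists N; intros n Hn.
  assert (Hle : supnorm (fsub (h n) g) <= e n).
  { apply supnorm_le; [| apply He0]; intro s; unfold fsub; rewrite Cmod_sub_sym; apply Hclose. }
  pose proof (supnorm_nonneg _ (fbounded_sub (h n) g (A_bounded _ (Hh n)) Hbnd)).
  unfold R_dist; rewrite Rminus_0_r, Rabs_pos_eq by assumption.
  pose proof (HN n Hn); lra.
Qed.

Lemma geometric_limit (h : nat -> K -> Cx) (r : nat -> R) :
  (forall k, A (h k)) -> (forall k, 0 < r k) -> (forall k, r (S k) <= r k / 2) ->
  (forall k, supnorm (fsub (h (S k)) (h k)) < r k / 4) ->
  exists g, A g /\ forall k, supnorm (fsub g (h k)) < r k.
Proof.
  intros Hh Hr Hhalf Hstep.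
  assert (Hrate : forall eps, 0 < eps -> exists N, forall n, (N <= n)%nat -> r n / 2 < eps).
  { intros eps Heps; destruct (halving_to_zero r Hr Hhalf eps Heps) as [N HN].
    exists N; intros n Hn; pose proof (HN n Hn); pose proof (Hr n); lra. }
  assert (Hpoint : forall s, exists l, forall k, Cmod (Cadd l (Copp (h k s))) <= r k / 2).
  { intro s; apply Cx_limit.
    - intros eps Heps; destruct (Hrate eps Heps) as [N HN]; exists N; apply HN; lia.
    - intros k m Hkm; pose proof (Hr m).
      assert (Hsteps : forall j, Cmod (Cadd (h (S j) s) (Copp (h j s))) <= r j / 4).
      { intro j; left; eapply Rle_lt_trans; [| apply (Hstep j)].
        apply (supnorm_ge (fsub _ _)), fbounded_sub; apply A_bounded, Hh. }
      pose proof (telescope_bound (fun j => h j s) r Hhalf Hsteps k m Hkm); simpl in *; lra. }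
  destruct (functional_choice _ Hpoint) as [g Hg].
  exists g; split.
  - apply (uniform_limit_in_A h (fun k => r k / 2) g Hh); [| exact Hrate |].
    + intro k; pose proof (Hr k); lra.
    + intros k s; apply Hg.
  - intro k; pose proof (Hr k); apply Rle_lt_trans with (r k / 2); [| lra].
    apply supnorm_le; [intro s; apply Hg | lra].
Qed.

Lemma refine_step (n : nat) (h : K -> Cx) (r : R) :
  A h -> 0 < supnorm h -> 0 < r ->
  exists h' r', A h' /\ 0 < r' <= r / 2 /\ supnorm (fsub h' h) < r / 4 /\
    forall y, A y -> supnorm (fsub y h') < r' -> thin_top d (/ INR (S n)) y.
Proof.
  intros Hh Hpos Hr.
  destruct (perturb_thin h (r / 4) (/ INR (S n)) Hh Hpos ltac:(lra) (inv_S_pos n))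
    as [h' [Hh' [Hthin Hclose]]].
  destruct (thin_top_open (/ INR (S n)) h' Hh' Hthin) as [e [He Hnbhd]].
  exists h', (Rmin (r / 2) e); split; [exact Hh' | split; [| split; [exact Hclose |]]].
  - split; [apply Rmin_glb_lt; lra | apply Rmin_l].
  - intros y Hy Hyh; apply Hnbhd; [exact Hy |].
    eapply Rlt_le_trans; [exact Hyh | apply Rmin_r].
Qed.

(** Elements of [A] with thin tops at all scales approximate every
    norm-one [x]: iterate [refine_step] with halving radii and pass to the
    limit with [geometric_limit]. *)
Lemma thin_everywhere_approx (x : K -> Cx) (r0 : R) :
  A x -> supnorm x = 1 -> 0 < r0 <= 1 / 2 ->
  exists g, A g /\ (forall n, thin_top d (/ INR (S n)) g) /\ supnorm (fsub g x) < r0.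
Proof.
  intros Hx Hx1 Hr0.
  set (P := fun (_ : nat) (p : (K -> Cx) * R) =>
         A (fst p) /\ 0 < snd p /\ supnorm (fsub (fst p) x) <= r0 / 2 - snd p / 2).
  set (Q := fun (k : nat) (p p' : (K -> Cx) * R) =>
         snd p' <= snd p / 2 /\ supnorm (fsub (fst p') (fst p)) < snd p / 4 /\
         forall y, A y -> supnorm (fsub y (fst p')) < snd p' -> thin_top d (/ INR (S k)) y).
  assert (Hbx := A_bounded x Hx).
  assert (HP0 : P 0%nat (x, r0)).
  { unfold P; simpl; rewrite supnorm_sub_self; repeat split; [exact Hx | lra | lra]. }
  assert (Hstep : forall k p, P k p -> exists p', P (S k) p' /\ Q k p p').
  { intros k [h r] [Hh [Hr Hhx]]; simpl in *; assert (Hbh := A_bounded h Hh).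
    assert (Hpos : 0 < supnorm h).
    { pose proof (supnorm_le_sub h x Hbh Hbx); rewrite (supnorm_sub_sym x h Hbx Hbh) in *; lra. }
    destruct (refine_step k h r Hh Hpos Hr) as [h' [r' [Hh' [Hr' [Hclose Hthin]]]]].
    exists (h', r'); unfold P, Q; simpl; repeat split; try tauto; try lra.
    pose proof (supnorm_sub_tri h' h x (A_bounded h' Hh') Hbh Hbx); lra. }
  destruct (iterate_choice P Q (x, r0) HP0 Hstep) as [u Hu].
  destruct (geometric_limit (fun k => fst (u k)) (fun k => snd (u k))) as [g [Hg Hgu]].
  all: try (intro k; destruct (Hu k) as [[Huk [Hrk _]] [Hhalf [Hstepk _]]]; assumption).
  exists g; split; [exact Hg | split].
  - intro n; destruct (Hu n) as [_ [_ [_ Hthin]]]; apply Hthin; [exact Hg | apply Hgu].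
  - destruct (Hu 0%nat) as [[Hh0 [Hr00 Hh0x]] _]; pose proof (Hgu 0%nat).
    pose proof (supnorm_nonneg _ (fbounded_sub _ _ (A_bounded _ Hh0) Hbx)).
    pose proof (supnorm_sub_tri g (fst (u 0%nat)) x (A_bounded g Hg) (A_bounded _ Hh0) Hbx).
    lra.
Qed.

Lemma normalize_near (x g : K -> Cx) :
  A x -> supnorm x = 1 -> A g -> supnorm (fsub g x) < 1 ->
  unit_sphere A (fscale (/ supnorm g, 0) g) /\
  supnorm (fsub (fscale (/ supnorm g, 0) g) x) <= 2 * supnorm (fsub g x).
Proof.
  intros Hx Hx1 Hg Hgx; assert (Hbx := A_bounded x Hx); assert (Hbg := A_bounded g Hg).
  set (N := supnorm g) in *; set (e := supnorm (fsub g x)) in *.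
  assert (HNup : N <= 1 + e) by (unfold N, e; rewrite <- Hx1; apply supnorm_le_sub; assumption).
  assert (HNlow : 1 <= N + e).
  { unfold N, e; rewrite <- Hx1, (supnorm_sub_sym g x Hbg Hbx); apply supnorm_le_sub; assumption. }
  assert (HNpos : 0 < N) by lra.
  assert (He0 : 0 <= e) by (apply supnorm_nonneg, fbounded_sub; assumption).
  split; [split |].
  - apply A_scale; [apply scalar_real | exact Hg].
  - rewrite supnorm_scale by (try apply Rinv_0_lt_compat; assumption); fold N; field; lra.
  - apply supnorm_le; [| lra]; intro s; unfold fsub.
    eapply Rle_trans; [apply (Cmod_sub_tri _ (g s)) |].
    replace (Cadd (fscale (/ N, 0) g s) (Copp (g s))) with (Cmul (/ N - 1, 0) (g s))
      by (unfold fscale; apply Cx_eq; simpl; ring).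
    rewrite Cmod_mul, Cmod_real.
    assert (Hscale : Rabs (/ N - 1) * Cmod (g s) <= e).
    { apply Rle_trans with (Rabs (/ N - 1) * N).
      - apply Rmult_le_compat_l; [apply Rabs_pos | apply supnorm_ge, Hbg].
      - rewrite <- (Rabs_pos_eq N) at 2 by lra; rewrite <- Rabs_mult.
        replace ((/ N - 1) * N) with (1 - N) by (field; lra); apply Rabs_le; lra. }
    assert (Hpt : Cmod (Cadd (g s) (Copp (x s))) <= e)
      by exact (supnorm_ge (fsub g x) s (fbounded_sub g x Hbg Hbx)).
    lra.
Qed.

Lemma sphere_density (x : K -> Cx) (eps : R) :
  unit_sphere A x -> 0 < eps ->
  exists g, (unit_sphere A g /\ forall n, thin_top d (/ INR (S n)) g) /\
            supnorm (fsub g x) < eps.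
Proof.
  intros [Hx Hx1] Heps; set (r0 := Rmin (eps / 4) (1 / 2)).
  assert (Hr0 : 0 < r0 <= 1 / 2 /\ r0 <= eps / 4).
  { unfold r0; repeat split; [apply Rmin_glb_lt; lra | apply Rmin_r | apply Rmin_l]. }
  destruct (thin_everywhere_approx x r0 Hx Hx1 ltac:(lra)) as [g [Hg [Hthin Hgx]]].
  destruct (normalize_near x g Hx Hx1 Hg ltac:(lra)) as [Hsph Hdist].
  assert (HNpos : 0 < supnorm g).
  { pose proof (supnorm_le_sub g x (A_bounded g Hg) (A_bounded x Hx)).
    rewrite (supnorm_sub_sym x g (A_bounded x Hx) (A_bounded g Hg)) in *; lra. }
  exists (fscale (/ supnorm g, 0) g); split; [split; [exact Hsph |] | lra].
  intro n; apply thin_top_scale; [apply A_bounded, Hg | apply Rinv_0_lt_compat, HNpos | apply Hthin].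
Qed.

Lemma thin_tops_shrink (x : K -> Cx) :
  supnorm x = 1 -> (forall n, thin_top d (/ INR (S n)) x) ->
  forall eta, 0 < eta -> exists del, 0 < del /\
    forall s1 s2, 1 - del < Cmod (x s1) -> 1 - del < Cmod (x s2) -> d s1 s2 < eta.
Proof.
  intros Hx1 Hthin eta Heta; destruct (inv_S_small eta Heta) as [n Hn].
  destruct (Hthin n) as [del [Hdel Htop]]; rewrite Hx1 in Htop.
  exists del; split; [exact Hdel |]; intros s1 s2 H1 H2; pose proof (Htop s1 s2 H1 H2); lra.
Qed.

Hypothesis Hcomp : complete_metric d.

Lemma thin_top_peak (x : K -> Cx) :
  fbounded x -> fcont d x -> supnorm x = 1 -> (forall n, thin_top d (/ INR (S n)) x) ->
  exists t, Cmod (x t) = 1 /\ forall eta, 0 < eta -> exists del, 0 < del /\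
    forall s, 1 - del < Cmod (x s) -> d s t < eta.
Proof.
  intros Hbx Hcx Hx1 Hthin; destruct Hd as [_ [_ [Hsym Htri]]].
  assert (Hnear : forall k : nat, exists s, 1 - / INR (S k) < Cmod (x s)).
  { intro k; apply supnorm_approx; pose proof (inv_S_pos k);
      pose proof (inv_S_le 0 k ltac:(lia)); simpl in *; lra. }
  destruct (functional_choice _ Hnear) as [u Hu].
  assert (Henter : forall del, 0 < del -> exists N, forall k, (N <= k)%nat -> 1 - del < Cmod (x (u k))).
  { intros del Hdel; destruct (inv_S_small del Hdel) as [N HN]; exists N; intros k Hk.
    pose proof (Hu k); pose proof (inv_S_le N k Hk); lra. }
  assert (Hcauchy : is_Cauchy d u).
  { intros eps Heps; destruct (thin_tops_shrink x Hx1 Hthin eps Heps) as [del [Hdel Hsmall]].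
    destruct (Henter del Hdel) as [N HN]; exists N; intros m k Hm Hk; apply Hsmall; auto. }
  destruct (Hcomp u Hcauchy) as [t Ht]; exists t; split.
  - apply Rle_antisym; [rewrite <- Hx1; apply supnorm_ge, Hbx |].
    apply le_of_forall_eps; intros eps Heps.
    destruct (Hcx t (eps / 2) ltac:(lra)) as [rho [Hrho Hcont]].
    destruct (Ht rho Hrho) as [N1 HN1]; destruct (Henter (eps / 2) ltac:(lra)) as [N2 HN2].
    set (k := Nat.max N1 N2).
    specialize (HN1 k ltac:(unfold k; lia)); rewrite Hsym in HN1.
    pose proof (Hcont (u k) HN1); pose proof (HN2 k ltac:(unfold k; lia)).
    pose proof (Cmod_le_add (x (u k)) (x t)); lra.
  - intros eta Heta; destruct (thin_tops_shrink x Hx1 Hthin (eta / 2) ltac:(lra)) as [del [Hdel Hsmall]].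
    exists del; split; [exact Hdel |]; intros s Hs.
    destruct (Ht (eta / 2) ltac:(lra)) as [N1 HN1]; destruct (Henter del Hdel) as [N2 HN2].
    set (k := Nat.max N1 N2).
    pose proof (HN1 k ltac:(unfold k; lia)); pose proof (Hsmall s (u k) Hs (HN2 k ltac:(unfold k; lia))).
    pose proof (Htri s (u k) t); lra.
Qed.

Lemma eval_dual_ball (t : K) (w : Cx) :
  scalar isreal w -> Cmod w <= 1 -> dual_ball isreal A (fun f => Cmul (f t) w).
Proof.
  intros Hw Hw1; split; [| split; [| split]].
  - intros f Hf; apply scalar_mul; [apply A_scalar |]; assumption.
  - intros f g _ _; unfold fadd; apply Cx_eq; simpl; ring.
  - intros c f _ _; unfold fscale; apply Cx_eq; simpl; ring.
  - intros f Hf; rewrite Cmod_mul.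
    pose proof (supnorm_ge f t (A_bounded f Hf)); pose proof (Cmod_nonneg (f t)).
    pose proof (Cmod_nonneg w); nra.
Qed.

(** Main estimate for uniqueness of the supporting functional: if [x]
    peaks at [t] and [psi x = 1], then [psi] is arbitrarily small on
    functions vanishing at [t].  Indeed, for [c] a small multiple of
    [conj (psi f)], [psi (x + c f) = 1 + |c| |psi f|], while
    [x + c f] has norm at most [1 + |c| eta]. *)
Lemma dual_small_at_peak (x : K -> Cx) (t : K) (psi : (K -> Cx) -> Cx) (f : K -> Cx) (eta : R) :
  A x -> supnorm x = 1 ->
  (forall rho, 0 < rho -> exists del, 0 < del /\ forall s, 1 - del < Cmod (x s) -> d s t < rho) ->
  dual_ball isreal A psi -> psi x = (1, 0) -> A f -> f t = C0 -> 0 < eta ->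
  Cmod (psi f) <= eta.
Proof.
  intros Hx Hx1 Hpeak [Hpsc [Hpadd [Hpscale Hpnorm]]] Hpx Hf Hft Heta.
  set (z := psi f); set (F := supnorm f).
  assert (HF : 0 <= F) by (apply supnorm_nonneg, A_bounded, Hf).
  assert (HzF : Cmod z <= F) by (apply Hpnorm, Hf).
  destruct (A_continuous f Hf t eta Heta) as [rho [Hrho Hcont]].
  destruct (Hpeak rho Hrho) as [del [Hdel Hnear]].
  destruct (small_weight F del Hdel) as [c [Hc HcF]].
  set (k := Cmul (c, 0) (Cconj z)).
  assert (Hk : scalar isreal k)
    by (apply scalar_mul; [apply scalar_real | apply scalar_conj, Hpsc, Hf]).
  assert (Hkm : Cmod k = c * Cmod z)
    by (unfold k; rewrite Cmod_mul, Cmod_real, Cmod_conj, Rabs_pos_eq; lra).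
  set (Y := fadd x (fscale k f)).
  assert (HY : A Y) by (apply A_add; [| apply A_scale]; assumption).
  assert (HpsiY : psi Y = (1 + c * (Cmod z * Cmod z), 0)).
  { unfold Y; rewrite Hpadd, Hpscale, Hpx by (try apply A_scale; assumption); fold z.
    unfold k; rewrite Cmod_sq; apply Cx_eq; simpl; ring. }
  assert (HYnorm : supnorm Y <= 1 + c * Cmod z * eta).
  { assert (0 <= c * Cmod z * eta) by (pose proof (Cmod_nonneg z); apply Rmult_le_pos; nra).
    apply supnorm_le; [| lra]; intro s; unfold Y, fadd, fscale.
    eapply Rle_trans; [apply Cmod_add |]; rewrite Cmod_mul, Hkm.
    pose proof (supnorm_ge x s (A_bounded x Hx)) as Hxs; rewrite Hx1 in Hxs.
    pose proof (Cmod_nonneg z); pose proof (Cmod_nonneg (f s)).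
    destruct (Rlt_dec (1 - del) (Cmod (x s))) as [Hs | Hs].
    - (* near [t], [f] is small *)
      assert (Hfs : Cmod (f s) < eta).
      { destruct Hd as [_ [_ [Hsym _]]].
        pose proof (Hcont s ltac:(rewrite Hsym; apply Hnear, Hs)) as Hfs.
        rewrite Hft in Hfs; replace (Cadd (f s) (Copp C0)) with (f s) in Hfs
          by (apply Cx_eq; simpl; ring); exact Hfs. }
      assert (c * Cmod z * Cmod (f s) <= c * Cmod z * eta) by (apply Rmult_le_compat_l; nra).
      lra.
    - (* away from [t], [|x|] leaves room [del] *)
      assert (Hfs : Cmod (f s) <= F) by exact (supnorm_ge f s (A_bounded f Hf)).
      assert (c * Cmod z * Cmod (f s) <= c * F * F) by (apply Rmult_le_compat; nra).
      lra. }
  pose proof (Hpnorm Y HY) as Hbound; rewrite HpsiY, Cmod_real, Rabs_pos_eq in Hbound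
    by (pose proof (Cmod_nonneg z); nra).
  assert (Hprod : (c * Cmod z) * (Cmod z - eta) <= 0) by nra.
  apply Rnot_lt_le; intro Hlt.
  assert (0 < c * Cmod z) by (apply Rmult_lt_0_compat; lra).
  assert (0 < (c * Cmod z) * (Cmod z - eta)) by (apply Rmult_lt_0_compat; lra).
  lra.
Qed.

Lemma Cunit_cancel (a z : Cx) : Cmod z = 1 -> Cadd a (Cmul (Copp (Cmul a (Cconj z))) z) = C0.
Proof.
  intro Hz; pose proof (Cmod_sq z) as Hsq; rewrite Hz in Hsq.
  apply Cx_eq; simpl.
  - transitivity (fst a * (1 - (fst z ^ 2 + snd z ^ 2))); [ring | rewrite <- Hsq; ring].
  - transitivity (snd a * (1 - (fst z ^ 2 + snd z ^ 2))); [ring | rewrite <- Hsq; ring].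
Qed.

Lemma smooth_at_peak (x : K -> Cx) (t : K) :
  A x -> supnorm x = 1 -> Cmod (x t) = 1 ->
  (forall rho, 0 < rho -> exists del, 0 < del /\ forall s, 1 - del < Cmod (x s) -> d s t < rho) ->
  smooth_point isreal A x.
Proof.
  intros Hx Hx1 Hxt Hpeak; set (w := Cconj (x t)).
  assert (Hw : scalar isreal w) by (apply scalar_conj, A_scalar, Hx).
  assert (Hw1 : Cmod w = 1) by (unfold w; rewrite Cmod_conj; exact Hxt).
  split; [exact Hx | split; [lra |]].
  exists (fun f => Cmul (f t) w); split; [apply eval_dual_ball; [exact Hw | lra] |].
  split; [unfold w; rewrite Cmul_conj_r, Hxt; simpl; ring |].
  intros psi Hpsi Hre f Hf.
  assert (Hpx : psi x = (1, 0)).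
  { destruct Hpsi as [_ [_ [_ Hpn]]]; pose proof (Hpn x Hx) as Hle; rewrite Hx1 in Hle.
    pose proof (Cmod_sq (psi x)); pose proof (Cmod_nonneg (psi x)); unfold Cre in Hre.
    apply Cx_eq; simpl; [exact Hre | rewrite Hre in *; nra]. }
  set (g := fadd f (fscale (Copp (Cmul (f t) w)) x)).
  assert (Hc : scalar isreal (Copp (Cmul (f t) w)))
    by (apply scalar_opp, scalar_mul; [apply A_scalar |]; assumption).
  assert (Hg : A g) by (apply A_add; [| apply A_scale]; assumption).
  assert (Hgt : g t = C0) by (apply Cunit_cancel, Hxt).
  assert (Hpg : psi g = C0).
  { apply Cmod_eq0, Rle_antisym; [| apply Cmod_nonneg].
    apply le_of_forall_eps; intros eps Heps; rewrite Rplus_0_l.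
    apply (dual_small_at_peak x t psi g eps); assumption. }
  destruct Hpsi as [_ [Hpadd [Hpscale _]]].
  unfold g in Hpg; rewrite Hpadd, Hpscale, Hpx in Hpg by (try apply A_scale; assumption).
  apply (f_equal (fun z => Cadd z (Cmul (f t) w))) in Hpg.
  replace (Cadd (Cadd (psi f) (Cmul (Copp (Cmul (f t) w)) (1, 0))) (Cmul (f t) w))
    with (psi f) in Hpg by (apply Cx_eq; simpl; ring).
  rewrite Hpg; apply Cx_eq; simpl; ring.
Qed.

Lemma smooth_of_thin_tops (x : K -> Cx) :
  unit_sphere A x -> (forall n, thin_top d (/ INR (S n)) x) -> smooth_point isreal A x.
Proof.
  intros [Hx Hx1] Hthin.
  destruct (thin_top_peak x (A_bounded x Hx) (A_continuous x Hx) Hx1 Hthin) as [t [Hxt Hpeak]].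
  exact (smooth_at_peak x t Hx Hx1 Hxt Hpeak).
Qed.

End ClosedSubalgebra.

Theorem corollary2p2 (isreal : bool) (K : Type) (d : K -> K -> R)
  (Hd : is_metric d) (Hcomp : complete_metric d)
  (A : (K -> Cx) -> Prop) (HA : closed_subalgebra isreal d A)
  (Hnorm : norming A (strong_peak_points isreal d A)) :
  exists G : (K -> Cx) -> Prop,
    dense_Gdelta_in A (unit_sphere A) G /\
    (forall x, G x -> smooth_point isreal A x).
Proof.
  exists (fun x => unit_sphere A x /\ forall n, thin_top d (/ INR (S n)) x).
  split; [split; [| split] |].
  - intros x [Hx _]; exact Hx.
  - exists (fun n => thin_top d (/ INR (S n))); split; [| tauto].
    intro n; exact (thin_top_open isreal K d A HA _).
  - intros x eps Hx Heps; exact (sphere_density isreal K d Hd A HA Hnorm x eps Hx Heps).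
  - intros x [Hx Hthin]; exact (smooth_of_thin_tops isreal K d Hd A HA Hcomp x Hx Hthin).
Qed.
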